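(* Let $\approx$ be an equinumerosity on $\mathbb{W}$. Then: (i) For $A,B\in\mathbb{W}$, $A\prec B$ holds if and only if $B\approx B'$ for some $B'\in\mathbb{W}$ that is a proper superset of $A$. Hence, given any two sets in $\mathbb{W}$, one of them is equinumerous (w.r.t. $\approx$) to a superset of the other. (ii) The relation $\prec$ is a (strict) preorder on $\mathbb{W}$ which induces a total ordering on the quotient set $\mathbb{W}/\approx$.
   Context: Let $\mathbb N=\{0,1,2,\dots\}$. Let $\mathbb{W}$ be the family of finitary point sets: sets $A\subseteq\bigcup_{k\ge1}\mathbb N^k$ of finite tuples of natural numbers (tuples of different lengths allowed) such that for every $n\in\mathbb N$ there is $h$ with $A\cap\{0,\dots,n\}^k=\emptyset$ for all $k>h$. Cartesian products are identified with concatenations: for point sets $A,B$, $A\times B=\{(a_1,\dots,a_k,b_1,\dots,b_h):(a_1,\dots,a_k)\in A,\ (b_1,\dots,b_h)\in B\}$; $\{n\}$ denotes the set whose only element is the 1-tuple $(n)$. $A,B\in\mathbb W$ are multipliable if distinct pairs $(a,b)\in A\times B$ (as pairs of tuples) have distinct concatenations. Given an equivalence relation $\approx$ on $\mathbb W$, write $A\succ B$, equivalently $B\prec A$, if there exist $A',B'\in\mathbb W$ with $B'\subsetneq A'$, $A\approx A'$ and $B\approx B'$. An equinumerosity is an equivalence relation $\approx$ on $\mathbb W$ such that for all $A,B\in\mathbb W$: (AP) $A\approx B$ iff $A\setminus B\approx B\setminus A$; (ZP) exactly one of $A\approx B$, $A\succ B$, $A\prec B$ holds; (TP) if $T$ is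 injective on $A$ and $T(a)$ is a permutation of the coordinates of $a$ for every $a\in A$, then $A\approx T[A]$; (UP) $A\times\{n\}\approx A$ for all $n\in\mathbb N$; (PP) if $A,B$ are multipliable, $A',B'$ are multipliable, $A\approx A'$ and $B\approx B'$, then $A\times B\approx A'\times B'$. *)

From mathcomp Require Import all_boot.
Set Implicit Arguments. Unset Strict Implicit. Unset Printing Implicit Defensive.

Definition pset := seq nat -> Prop.

Definition inW (A : pset) : Prop :=
  (forall x, A x -> 0 < size x) /\
  (forall n : nat, exists h : nat, forall x, A x -> h < size x ->
       ~ (all (fun a => a <= n) x)).

Definition psubset (A B : pset) : Prop := forall x, A x -> B x.
Definition proper_subset (A B : pset) : Prop := psubset A B /\ ~ psubset B A.
Definition setminus (A B : pset) : pset := fun x => A x /\ ~ B x.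

(* Cartesian product = set of concatenations. *)
Definition pprod (A B : pset) : pset :=
  fun z => exists a b, A a /\ B b /\ z = a ++ b.

Definition psing (n : nat) : pset := fun z => z = [:: n].

Definition multipliable (A B : pset) : Prop :=
  forall a b a' b', A a -> B b -> A a' -> B b' -> a ++ b = a' ++ b' ->
    a = a' /\ b = b'.

Definition pimage (T : seq nat -> seq nat) (A : pset) : pset :=
  fun y => exists a, A a /\ y = T a.

Definition equiv_on_W (R : pset -> pset -> Prop) : Prop :=
  (forall A, inW A -> R A A) /\
  (forall A B, inW A -> inW B -> R A B -> R B A) /\
  (forall A B C, inW A -> inW B -> inW C -> R A B -> R B C -> R A C).

Definition psucc (R : pset -> pset -> Prop) (A B : pset) : Prop :=
  exists A' B', inW A' /\ inW B' /\ proper_subset B' A' /\ R A A' /\ R B B'.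

Definition pprec (R : pset -> pset -> Prop) (A B : pset) : Prop := psucc R B A.

Definition equinumerosity (R : pset -> pset -> Prop) : Prop :=
  equiv_on_W R /\
  (forall A B, inW A -> inW B -> (R A B <-> R (setminus A B) (setminus B A))) /\
  (forall A B, inW A -> inW B ->
     (R A B /\ ~ psucc R A B /\ ~ pprec R A B) \/
     (~ R A B /\ psucc R A B /\ ~ pprec R A B) \/
     (~ R A B /\ ~ psucc R A B /\ pprec R A B)) /\
  (forall (A : pset) (T : seq nat -> seq nat), inW A ->
     (forall a a', A a -> A a' -> T a = T a' -> a = a') ->
     (forall a, A a -> perm_eq (T a) a) ->
     R A (pimage T A)) /\
  (forall A (n : nat), inW A -> R (pprod A (psing n)) A) /\
  (forall A B A' B', inW A -> inW B -> inW A' -> inW B' ->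
     multipliable A B -> multipliable A' B' -> R A A' -> R B B' ->
     R (pprod A B) (pprod A' B')).

From mathcomp Require Import all_boot zify.
From Stdlib Require Import Classical FunctionalExtensionality PropExtensionality.
Set Implicit Arguments. Unset Strict Implicit.

(* Everything rests on one construction: every S in W is equinumerous to a set
   disjoint from any prescribed T in W.  Mark the tuples of S by appending 1
   (harmless by (UP)), then keep appending 0s to each marked tuple until the
   result leaves T.  The set C of all such climbs satisfies C x {0} ≈ C by (UP),
   and (AP) turns this into S x {1} ≈ (C x {0}) \ T, the set of first exits.
   Supersets can then be transported along ≈: if X ≈ X' ⊆ Y', add to X a copy
   of Y' \ X' disjoint from X and X'.  This characterises ≺ by supersets, and
   (ZP) does the rest. *)

Definition punion (A B : pset) : pset := fun x => A x \/ B x.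

Definition pdisjoint (A B : pset) : Prop := forall x, A x -> ~ B x.

Lemma pset_ext (A B : pset) : (forall x, A x <-> B x) -> A = B.
Proof.
by move=> AB; apply: functional_extensionality => x; apply: propositional_extensionality.
Qed.

Lemma ex_minimal (P : nat -> Prop) :
  (exists k, P k) -> exists k, P k /\ forall i, i < k -> ~ P i.
Proof.
move=> [k Pk]; apply: NNPP => none; move: Pk; elim/ltn_ind: k => k IH Pk.
by apply: none; exists k; split=> // i /IH.
Qed.

Lemma last_pprod_psing (A : pset) n z : pprod A (psing n) z -> last 0 z = n.
Proof. by move=> [a [_ [_ [-> ->]]]]; rewrite last_cat. Qed.

Lemma cat_nseqSr (t : seq nat) j : t ++ nseq j.+1 0 = (t ++ nseq j 0) ++ [:: 0].
Proof. by rewrite -catA -[[:: 0]]/(nseq 1 0) -nseqD addn1. Qed.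

Lemma inW_sub A B : inW B -> psubset A B -> inW A.
Proof.
move=> [B_pos B_fin] AB; split=> [x /AB /B_pos // | n].
by have [h Hh] := B_fin n; exists h => x /AB; exact: Hh.
Qed.

Lemma inW_union A B : inW A -> inW B -> inW (punion A B).
Proof.
move=> [A_pos A_fin] [B_pos B_fin]; split=> [x [/A_pos|/B_pos] // | n].
have [hA HA] := A_fin n; have [hB HB] := B_fin n.
exists (maxn hA hB) => x [Ax|Bx] long.
- by apply: HA => //; lia.
- by apply: HB => //; lia.
Qed.

Lemma inW_pprod_psing A m : inW A -> inW (pprod A (psing m)).
Proof.
move=> [A_pos A_fin]; split=> [_ [a [_ [_ [-> ->]]]] | n].
  by rewrite size_cat /=; lia.
have [h Hh] := A_fin n; exists h.+1 => _ [a [_ [Aa [-> ->]]]].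
rewrite size_cat all_cat /= => long /andP[bounded _].
by apply: (Hh a Aa) => //; lia.
Qed.

Lemma inW_exit (T : pset) (t : seq nat) : inW T -> exists k, ~ T (t ++ nseq k.+1 0).
Proof.
move=> [_ T_fin]; have [h Hh] := T_fin (\max_(a <- t) a).
exists h => Tt; apply: (Hh _ Tt); first by rewrite size_cat size_nseq; lia.
rewrite all_cat all_nseq orbT andbT.
by apply/allP => a a_t; exact: (leq_bigmax_seq (F := id)).
Qed.

Section Equinumerosity.

Variable R : pset -> pset -> Prop.
Hypothesis HR : equinumerosity R.

Lemma eqnum_refl A : inW A -> R A A.
Proof. by case: HR => [[refl _] _]; exact: refl. Qed.

Lemma eqnum_sym A B : inW A -> inW B -> R A B -> R B A.
Proof. by case: HR => [[_ [sym _]] _]; exact: sym. Qed.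

Lemma eqnum_trans A B C : inW A -> inW B -> inW C -> R A B -> R B C -> R A C.
Proof. by case: HR => [[_ [_ trans]] _]; exact: trans. Qed.

Lemma eqnum_trichotomy A B : inW A -> inW B ->
  (R A B /\ ~ psucc R A B /\ ~ pprec R A B) \/
  (~ R A B /\ psucc R A B /\ ~ pprec R A B) \/
  (~ R A B /\ ~ psucc R A B /\ pprec R A B).
Proof. by case: HR => [_ [_ [ZP _]]]; exact: ZP. Qed.

Lemma eqnum_pprod_psing A n : inW A -> R A (pprod A (psing n)).
Proof.
move=> WA; apply: eqnum_sym => //; first exact: inW_pprod_psing.
by case: HR => [_ [_ [_ [_ [UP _]]]]]; exact: UP.
Qed.

Lemma eqnum_diffE X Y P Q : inW X -> inW Y ->
  (forall x, setminus X Y x <-> P x) -> (forall x, setminus Y X x <-> Q x) ->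
  R X Y <-> R P Q.
Proof.
move=> WX WY /pset_ext <- /pset_ext <-.
by case: HR => [_ [AP _]]; exact: AP.
Qed.

Lemma eqnum_union X X' Y Y' : inW X -> inW X' -> inW Y -> inW Y' ->
  R X X' -> R Y Y' -> pdisjoint X Y -> pdisjoint X' Y -> pdisjoint X' Y' ->
  R (punion X Y) (punion X' Y').
Proof.
move=> WX WX' WY WY' RX RY XY X'Y X'Y'.
apply: (@eqnum_trans _ (punion X' Y)); try exact: inW_union.
- apply/(eqnum_diffE (P := setminus X X') (Q := setminus X' X)); try exact: inW_union.
  + move=> x; rewrite /punion /setminus; split; first tauto.
    by move=> [Xx X'x]; split=> [|[//|]]; [left | exact: XY].
  + move=> x; rewrite /punion /setminus; split; first tauto.
    by move=> [X'x Xx]; split=> [|[//|]]; [left | exact: X'Y].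
  + exact: (eqnum_diffE WX WX' (fun=> iff_refl _) (fun=> iff_refl _)).1 RX.
- apply/(eqnum_diffE (P := setminus Y Y') (Q := setminus Y' Y)); try exact: inW_union.
  + move=> x; rewrite /punion /setminus; split; first tauto.
    by move=> [Yx Y'x]; split=> [|[X'x|//]]; [right | exact: X'Y X'x Yx].
  + move=> x; rewrite /punion /setminus; split; first tauto.
    by move=> [Y'x Yx]; split=> [|[X'x|//]]; [right | exact: X'Y' X'x Y'x].
  + exact: (eqnum_diffE WY WY' (fun=> iff_refl _) (fun=> iff_refl _)).1 RY.
Qed.

Section Escape.

Variables S T : pset.
Hypotheses (WS : inW S) (WT : inW T).

Definition climb : pset := fun z => exists t j, pprod S (psing 1) t /\
  (forall i, 0 < i -> i <= j -> T (t ++ nseq i 0)) /\ z = t ++ nseq j 0.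

Definition escape : pset := setminus (pprod climb (psing 0)) T.

Lemma climb_cases z : climb z -> pprod S (psing 1) z \/ T z.
Proof.
move=> [t [[|j] [St [run ->]]]]; first by rewrite cats0; left.
by right; apply: run.
Qed.

Lemma climb0 t : pprod S (psing 1) t -> climb t.
Proof. by move=> St; exists t, 0; rewrite cats0; split=> //; split=> //; lia. Qed.

Lemma inW_climb : inW climb.
Proof.
have WS1 := inW_pprod_psing 1 WS.
apply: (inW_sub (inW_union WS1 (inW_pprod_psing 0 (inW_union WS1 WT)))).
move=> _ [t [[|j] [St [run ->]]]]; first by rewrite cats0; left.
right; exists (t ++ nseq j 0), [:: 0]; split; last by rewrite cat_nseqSr.
apply: climb_cases; exists t, j; split=> //; split=> // i i0 ij.
by apply: run => //; lia.
Qed.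

Lemma inW_escape : inW escape.
Proof. by apply: (inW_sub (inW_pprod_psing 0 inW_climb)) => x []. Qed.

Lemma setminus_climb_shift z :
  setminus climb (pprod climb (psing 0)) z <-> pprod S (psing 1) z.
Proof.
split.
- move=> [[t [[|j] [St [run ->]]]] notC0]; first by rewrite cats0.
  case: notC0; exists (t ++ nseq j 0), [:: 0]; split; last by rewrite cat_nseqSr.
  by exists t, j; split=> //; split=> // i i0 ij; apply: run => //; lia.
- move=> S1z; split; first exact: climb0.
  by move=> /last_pprod_psing; rewrite (last_pprod_psing S1z).
Qed.

Lemma setminus_shift_climb z :
  setminus (pprod climb (psing 0)) climb z <-> escape z.
Proof.
split.
- move=> [[a [b [[t [j [St [run ->]]]] [-> ->]]]] notC]; split.
    by exists (t ++ nseq j 0), [:: 0]; split=> //; exists t, j.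
  rewrite -cat_nseqSr => Tz; apply: notC; exists t, j.+1; rewrite cat_nseqSr.
  split=> //; split=> // i i0; rewrite leq_eqVlt => /orP[/eqP -> // | ij].
  exact: run.
- move=> [C0z notT]; split=> // /climb_cases [S1z | //].
  by move: (last_pprod_psing S1z); rewrite (last_pprod_psing C0z).
Qed.

Lemma eqnum_escape : R S escape.
Proof.
have WS1 := inW_pprod_psing 1 WS; have WC := inW_climb.
apply: (eqnum_trans WS WS1 inW_escape); first exact: eqnum_pprod_psing.
have RC : R climb (pprod climb (psing 0)) by exact: eqnum_pprod_psing.
exact: (eqnum_diffE WC (inW_pprod_psing 0 WC)
          setminus_climb_shift setminus_shift_climb).1 RC.
Qed.

Lemma escape_nonempty : (exists s, S s) -> exists y, escape y.
Proof.
move=> [s Ss]; pose t := s ++ [:: 1].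
have [k [exit_k stay]] := ex_minimal (inW_exit t WT).
exists ((t ++ nseq k 0) ++ [:: 0]); split; last by rewrite -cat_nseqSr.
exists (t ++ nseq k 0), [:: 0]; split=> //; exists t, k; split; first by exists s, [:: 1].
by split=> // -[//|i] _ ik; apply: NNPP => notT; apply: (stay i).
Qed.

End Escape.

Lemma eqnum_disjoint_copy S T : inW S -> inW T ->
  exists F, inW F /\ R S F /\ pdisjoint F T /\ ((exists s, S s) -> exists y, F y).
Proof.
move=> WS WT; exists (escape S T); split; first exact: inW_escape.
split; first exact: eqnum_escape.
by split; [move=> x [] | exact: escape_nonempty].
Qed.

Lemma eqnum_superset X X' Y' : inW X -> inW X' -> inW Y' ->
  R X X' -> psubset X' Y' ->
  exists Y, inW Y /\ psubset X Y /\ R Y Y' /\ (proper_subset X' Y' -> proper_subset X Y).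
Proof.
move=> WX WX' WY' RX X'Y'.
have WD : inW (setminus Y' X') by apply: (inW_sub WY') => x [].
have [F [WF [RF [FXX' F_ne]]]] := eqnum_disjoint_copy WD (inW_union WX WX').
exists (punion X F); split; first exact: inW_union.
split; first by move=> x Xx; left.
split.
  have -> : Y' = punion X' (setminus Y' X').
    apply: pset_ext => x; rewrite /punion /setminus.
    by split=> [Y'x | [/X'Y'|[]] //]; case: (classic (X' x)) => ?; tauto.
  apply: eqnum_union => //; first exact: eqnum_sym.
  - by move=> x Xx Fx; apply: (FXX' x Fx); left.
  - by move=> x X'x Fx; apply: (FXX' x Fx); right.
  - by move=> x X'x [].
move=> [_ notY'X']; split; first by move=> x Xx; left.
have [|y Fy] := F_ne.
  by apply: NNPP => none; apply: notY'X' => x Y'x; apply: NNPP => ?; apply: none; exists x.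
by move=> /(_ y (or_intror Fy)) Xy; apply: (FXX' y Fy); left.
Qed.

Lemma prec_iff A B : inW A -> inW B ->
  (pprec R A B <-> exists B', inW B' /\ R B B' /\ proper_subset A B').
Proof.
move=> WA WB; split.
- move=> [B0 [A0 [WB0 [WA0 [A0B0 [RBB0 RAA0]]]]]].
  have [Y [WY [AY [RY properAY]]]] := eqnum_superset WA WA0 WB0 RAA0 (proj1 A0B0).
  exists Y; split=> //; split; last exact: properAY.
  exact: eqnum_trans WB WB0 WY RBB0 (eqnum_sym WY WB0 RY).
- move=> [B' [WB' [RBB' AB']]].
  by exists B', A; do 4!split=> //; exact: eqnum_refl.
Qed.

Lemma eqnum_or_prec A B : inW A -> inW B -> R A B \/ pprec R A B \/ pprec R B A.
Proof. by move=> WA WB; case: (eqnum_trichotomy WA WB); tauto. Qed.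

Lemma superset_comparable A B : inW A -> inW B ->
  (exists B', inW B' /\ R B B' /\ psubset A B') \/
  (exists A', inW A' /\ R A A' /\ psubset B A').
Proof.
move=> WA WB; case: (eqnum_or_prec WA WB) => [RAB | [/prec_iff | /prec_iff]].
- by left; exists A; split=> //; split=> //; exact: eqnum_sym.
- by move=> /(_ WA WB) [B' [WB' [RB' [AB' _]]]]; left; exists B'.
- by move=> /(_ WB WA) [A' [WA' [RA' [BA' _]]]]; right; exists A'.
Qed.

Lemma prec_irrefl A : inW A -> ~ pprec R A A.
Proof. by move=> WA; case: (eqnum_trichotomy WA WA); have := eqnum_refl WA; tauto. Qed.

Lemma prec_trans A B C : inW A -> inW B -> inW C ->
  pprec R A B -> pprec R B C -> pprec R A C.
Proof.
move=> WA WB WC /(prec_iff WA WB) [B1 [WB1 [RB1 [AB1 notB1A]]]].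
move=> /(prec_iff WB WC) [C1 [WC1 [RC1 [BC1 _]]]].
have [Y [WY [B1Y [RY _]]]] := eqnum_superset WB1 WB WC1 (eqnum_sym WB WB1 RB1) BC1.
apply/(prec_iff WA WC); exists Y; split=> //; split.
  exact: eqnum_trans WC WC1 WY RC1 (eqnum_sym WY WC1 RY).
by split=> [x /AB1 /B1Y // | YA]; apply: notB1A => x /B1Y /YA.
Qed.

Lemma prec_eqnum A A' B B' : inW A -> inW A' -> inW B -> inW B' ->
  R A A' -> R B B' -> pprec R A B -> pprec R A' B'.
Proof.
move=> WA WA' WB WB' RA RB [B0 [A0 [WB0 [WA0 [A0B0 [RB0 RA0]]]]]].
exists B0, A0; do 3!split=> //; split.
- exact: eqnum_trans WB' WB WB0 (eqnum_sym WB WB' RB) RB0.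
- exact: eqnum_trans WA' WA WA0 (eqnum_sym WA WA' RA) RA0.
Qed.

End Equinumerosity.

Theorem proposition1p4 (R : pset -> pset -> Prop) :
  equinumerosity R ->
  (* (i) *)
  ((forall A B, inW A -> inW B ->
      (pprec R A B <-> exists B', inW B' /\ R B B' /\ proper_subset A B')) /\
   (forall A B, inW A -> inW B ->
      (exists B', inW B' /\ R B B' /\ psubset A B') \/
      (exists A', inW A' /\ R A A' /\ psubset B A'))) /\
  (* (ii) strict preorder on W, inducing a total order on W/≈ *)
  ((forall A, inW A -> ~ pprec R A A) /\
   (forall A B C, inW A -> inW B -> inW C ->
      pprec R A B -> pprec R B C -> pprec R A C) /\
   (forall A A' B B', inW A -> inW A' -> inW B -> inW B' ->
      R A A' -> R B B' -> pprec R A B -> pprec R A' B') /\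
   (forall A B, inW A -> inW B -> R A B \/ pprec R A B \/ pprec R B A)).
Proof.
move=> HR; split; split.
- exact: prec_iff.
- exact: superset_comparable.
- exact: prec_irrefl.
- split; first exact: prec_trans.
  split; [exact: prec_eqnum | exact: eqnum_or_prec].
Qed.
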